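(* There are constants $C\in(0,\infty)$ and $c\in(0,1)$ such that for all $N,k\in\mathbb N$ and all $n\in\mathbb N$ with $n\le N$, $$\P(\tau^{(N)}_k=n)\le C\,k\,\P(T^{(N)}_1=n)\,\P(T^{(N)}_1\le n)^{k-1}\exp\Big(-\frac{ck}{\log n+1}\log^+\frac{ck}{\log n+1}\Big),$$ where $\log^+x:=\max(\log x,0)$.
   Context: Fix positive reals $r(n)$, $n\in\mathbb N$, with $r(n)=\frac an(1+o(1))$ as $n\to\infty$ for some $a\in(0,\infty)$; $R_N:=\sum_{n=1}^Nr(n)$. For each $N$, $(T^{(N)}_i)_{i\ge1}$ are i.i.d. with $\P(T^{(N)}_i=n)=\frac{r(n)}{R_N}\mathbf 1_{\{1,\dots,N\}}(n)$, and $\tau^{(N)}_k=\sum_{i=1}^kT^{(N)}_i$. *)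

From Stdlib Require Import Reals Lra Lia Arith.
Open Scope R_scope.

Fixpoint sum1 (f : nat -> R) (M : nat) : R :=
  match M with
  | O => 0
  | S M' => sum1 f M' + f (S M')
  end.

Definition RN (r : nat -> R) (N : nat) : R := sum1 r N.

(* P(T^(N)_1 = n) = r(n)/R_N * 1_{1..N}(n) *)
Definition pT (r : nat -> R) (N n : nat) : R :=
  if andb (1 <=? n)%nat (n <=? N)%nat then r n / RN r N else 0.

Definition cdfT (r : nat -> R) (N n : nat) : R :=
  sum1 (fun m => pT r N m) n.

(* P(tau^(N)_k = n): law of the sum of k i.i.d. copies of T^(N)_1,
   i.e. the k-fold convolution power of the law of T^(N)_1 (tau_0 = 0). *)
Fixpoint ptau (r : nat -> R) (N k n : nat) : R :=
  match k with
  | O => if (n =? 0)%nat then 1 else 0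
  | S k' => sum1 (fun m => if (m <=? n)%nat then pT r N m * ptau r N k' (n - m) else 0) N
  end.

Definition logp (x : R) : R := Rmax (ln x) 0.

(* Size biasing, n P(tau_{k+1} = n) = (k+1) sum_m m P(T = m) P(tau_k = n - m), together with
   A1 <= m r(m) <= A2, gives P(tau_{k+1} = n) <= (A2/A1) (k+1) P(T = n) P(tau_k < n).
   For 0 < z <= 1 an exponential Chebyshev bound gives P(tau_k < n) <= z^-n E[z^T; T <= n]^k.
   Take z = e^{-1/a} with n/a between x and 2x, where x = c k / (log n + 1): every term
   i >= a of E[z^T; T <= n] loses a fixed fraction of its mass and sum_{a <= i <= n} 1/i
   ~ log (n/a), so E[z^T; T <= n] <= P(T <= n) exp(-rho log(n/a) / (log n + 1)).  The
   resulting exponent n/a - k rho log(n/a) / (log n + 1) is at most e - x log x. *)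
From Stdlib Require Import Reals Lra Lia ZArith.
Open Scope R_scope.

(* Sums over 0 <= m < M; thus sum0 (ptau r N k) n is P(tau_k < n). *)
Fixpoint sum0 (f : nat -> R) (M : nat) : R :=
  match M with O => 0 | S M' => sum0 f M' + f M' end.

Lemma sum1_ext f g M : (forall m, (1 <= m <= M)%nat -> f m = g m) -> sum1 f M = sum1 g M.
Proof.
  induction M as [|M IH]; intros H; simpl; auto.
  rewrite IH by (intros; apply H; lia); rewrite H by lia; reflexivity.
Qed.

Lemma sum0_ext f g M : (forall m, (m < M)%nat -> f m = g m) -> sum0 f M = sum0 g M.
Proof.
  induction M as [|M IH]; intros H; simpl; auto.
  rewrite IH by (intros; apply H; lia); rewrite H by lia; reflexivity.
Qed.

Lemma sum1_le f g M : (forall m, (1 <= m <= M)%nat -> f m <= g m) -> sum1 f M <= sum1 g M.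
Proof.
  induction M as [|M IH]; intros H; simpl; [lra|].
  apply Rplus_le_compat; [apply IH; intros; apply H | apply H]; lia.
Qed.

Lemma sum0_le f g M : (forall m, (m < M)%nat -> f m <= g m) -> sum0 f M <= sum0 g M.
Proof.
  induction M as [|M IH]; intros H; simpl; [lra|].
  apply Rplus_le_compat; [apply IH; intros; apply H | apply H]; lia.
Qed.

Lemma sum1_zero f M : (forall m, (1 <= m <= M)%nat -> f m = 0) -> sum1 f M = 0.
Proof.
  induction M as [|M IH]; intros H; simpl; auto.
  rewrite IH by (intros; apply H; lia); rewrite H by lia; lra.
Qed.

Lemma sum1_nonneg f M : (forall m, (1 <= m <= M)%nat -> 0 <= f m) -> 0 <= sum1 f M.
Proof.
  intros H; rewrite <- (sum1_zero (fun _ => 0) M) by auto.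
  now apply sum1_le.
Qed.

Lemma sum0_nonneg f M : (forall m, (m < M)%nat -> 0 <= f m) -> 0 <= sum0 f M.
Proof.
  induction M as [|M IH]; intros H; simpl; [lra|].
  apply Rplus_le_le_0_compat; [apply IH; intros; apply H | apply H]; lia.
Qed.

Lemma sum1_plus f g M : sum1 (fun m => f m + g m) M = sum1 f M + sum1 g M.
Proof. induction M; simpl; [lra|]. rewrite IHM; lra. Qed.

Lemma sum1_scal c f M : sum1 (fun m => c * f m) M = c * sum1 f M.
Proof. induction M; simpl; [lra|]. rewrite IHM; lra. Qed.

Lemma sum0_scal c f M : sum0 (fun m => c * f m) M = c * sum0 f M.
Proof. induction M; simpl; [lra|]. rewrite IHM; lra. Qed.

Lemma sum1_swap (g : nat -> nat -> R) M K :
  sum1 (fun i => sum1 (g i) K) M = sum1 (fun m => sum1 (fun i => g i m) M) K.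
Proof.
  induction M; simpl.
  - symmetry; now apply sum1_zero.
  - now rewrite IHM, <- sum1_plus.
Qed.

Lemma sum0_sum1_swap (g : nat -> nat -> R) M K :
  sum0 (fun m => sum1 (g m) K) M = sum1 (fun i => sum0 (fun m => g m i) M) K.
Proof.
  induction M; simpl.
  - symmetry; now apply sum1_zero.
  - now rewrite IHM, <- sum1_plus.
Qed.

Lemma sum1_trunc f n N : (n <= N)%nat -> (forall m, (n < m <= N)%nat -> f m = 0) ->
  sum1 f N = sum1 f n.
Proof.
  induction N as [|N IH]; intros Hn H.
  - now replace n with 0%nat by lia.
  - destruct (Nat.eq_dec n (S N)) as [->|]; [reflexivity|].
    simpl; rewrite IH by (try lia; intros; apply H; lia); rewrite H by lia; lra.
Qed.

Lemma sum1_le_upper f n M : (forall m, (1 <= m)%nat -> 0 <= f m) -> (n <= M)%nat ->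
  sum1 f n <= sum1 f M.
Proof.
  intros H; induction M as [|M IH]; intros Hn.
  - replace n with 0%nat by lia; lra.
  - destruct (Nat.eq_dec n (S M)) as [->|]; [lra|].
    simpl; specialize (IH ltac:(lia)); specialize (H (S M) ltac:(lia)); lra.
Qed.

Lemma sum1_rev n : forall g, sum1 (fun m => g (n - m)%nat) n = sum0 g n.
Proof.
  induction n as [|n IH]; intros g; [reflexivity|].
  cbn [sum1]; rewrite Nat.sub_diag.
  rewrite (sum1_ext _ (fun m => (fun x => g (S x)) (n - m)%nat))
    by (intros m Hm; f_equal; lia).
  rewrite (IH (fun x => g (S x))); clear IH.
  induction n as [|n IH]; simpl in *; lra.
Qed.

Lemma sum0_shift_index (g : nat -> R) i M : (1 <= i)%nat ->
  sum0 (fun m => if (i <=? m)%nat then g (m - i)%nat else 0) (S M) =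
  if (i <=? M)%nat then sum0 g (S (M - i)) else 0.
Proof.
  intros Hi; induction M as [|M IH].
  - simpl; destruct i; [lia|]; simpl; lra.
  - change (sum0 (fun m => if (i <=? m)%nat then g (m - i)%nat else 0) (S M) +
      (if (i <=? S M)%nat then g (S M - i)%nat else 0) =
      (if (i <=? S M)%nat then sum0 g (S (S M - i)) else 0)).
    rewrite IH.
    destruct (Nat.leb_spec i M); destruct (Nat.leb_spec i (S M)); try lia.
    + now replace (S M - i)%nat with (S (M - i)) by lia.
    + replace i with (S M) by lia; rewrite Nat.sub_diag; simpl; lra.
    + lra.
Qed.

Section Law.
Variable r : nat -> R.
Hypothesis hpos : forall n : nat, (1 <= n)%nat -> 0 < r n.

Lemma RN_pos N : (1 <= N)%nat -> 0 < RN r N.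
Proof.
  unfold RN; induction N as [|N IH]; intros H; [lia|]; simpl.
  pose proof (hpos (S N) ltac:(lia)).
  destruct (Nat.eq_dec N 0) as [->|]; simpl; [lra|].
  specialize (IH ltac:(lia)); lra.
Qed.

Lemma pT_in N m : (1 <= m <= N)%nat -> pT r N m = r m / RN r N.
Proof.
  intros H; unfold pT.
  destruct (Nat.leb_spec 1 m); destruct (Nat.leb_spec m N); simpl; lia || auto.
Qed.

Lemma pT_out N m : ~ (1 <= m <= N)%nat -> pT r N m = 0.
Proof.
  intros H; unfold pT.
  destruct (Nat.leb_spec 1 m); destruct (Nat.leb_spec m N); simpl; lia || auto.
Qed.

Lemma pT_nonneg N m : 0 <= pT r N m.
Proof.
  destruct (le_dec 1 m); destruct (le_dec m N); [|rewrite pT_out by lia; lra ..].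
  rewrite pT_in by lia.
  apply Rlt_le, Rdiv_lt_0_compat; [apply hpos | apply RN_pos]; lia.
Qed.

Lemma cdfT_nonneg N n : 0 <= cdfT r N n.
Proof. apply sum1_nonneg; intros; apply pT_nonneg. Qed.

Lemma cdfT_eq N n : (1 <= n <= N)%nat -> cdfT r N n = RN r n / RN r N.
Proof.
  intros Hn; unfold cdfT, RN, Rdiv; rewrite Rmult_comm, <- sum1_scal.
  apply sum1_ext; intros m Hm; rewrite pT_in by lia; unfold RN, Rdiv; ring.
Qed.

Lemma ptau_nonneg N k n : 0 <= ptau r N k n.
Proof.
  revert n; induction k as [|k IH]; intros n; simpl.
  - destruct (n =? 0)%nat; lra.
  - apply sum1_nonneg; intros m _; destruct (m <=? n)%nat; [|lra].
    apply Rmult_le_pos; [apply pT_nonneg | apply IH].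
Qed.

Lemma ptau_lt_k N k n : (n < k)%nat -> ptau r N k n = 0.
Proof.
  revert n; induction k as [|k IH]; intros n H; [lia|]; simpl.
  apply sum1_zero; intros m Hm; destruct (Nat.leb_spec m n); [|lra].
  rewrite IH by lia; lra.
Qed.

Lemma ptau_size_bias N k : forall n, INR n * ptau r N (S k) n =
  INR (S k) * sum1 (fun m => if (m <=? n)%nat then INR m * pT r N m * ptau r N k (n - m) else 0) N.
Proof.
  induction k as [|k IH]; intros n.
  - cbn [ptau]; rewrite <- !sum1_scal; apply sum1_ext; intros m Hm.
    destruct (Nat.leb_spec m n); [|lra].
    destruct (Nat.eqb_spec (n - m) 0); [|lra].
    replace n with m by lia; simpl; lra.
  - set (G := fun i m => if andb (i <=? n)%nat (m <=? n - i)%nat then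
          pT r N i * INR m * pT r N m * ptau r N k (n - i - m) else 0).
    set (A := fun m => if (m <=? n)%nat then INR m * pT r N m * ptau r N (S k) (n - m) else 0).
    assert (HA : sum1 A N = sum1 (fun m => sum1 (fun i => G i m) N) N).
    { apply sum1_ext; intros m Hm; unfold A, G; cbn [ptau].
      destruct (Nat.leb_spec m n).
      - rewrite <- sum1_scal; apply sum1_ext; intros i Hi.
        destruct (Nat.leb_spec i (n - m)); destruct (Nat.leb_spec i n);
          destruct (Nat.leb_spec m (n - i)); simpl; try lia; try lra.
        replace (n - i - m)%nat with (n - m - i)%nat by lia; lra.
      - symmetry; apply sum1_zero; intros i Hi.
        destruct (Nat.leb_spec i n); destruct (Nat.leb_spec m (n - i)); simpl; lia || lra. }
    assert (HL : INR n * ptau r N (S (S k)) n =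
       sum1 A N + INR (S k) * sum1 (fun i => sum1 (fun m => G i m) N) N).
    { cbn [ptau]; rewrite <- sum1_scal, <- (sum1_scal (INR (S k))), <- sum1_plus.
      apply sum1_ext; intros i Hi; unfold A.
      destruct (Nat.leb_spec i n).
      - replace (INR n) with (INR i + INR (n - i)) by (rewrite <- plus_INR; f_equal; lia).
        transitivity (INR i * pT r N i * ptau r N (S k) (n - i) +
                      pT r N i * (INR (n - i) * ptau r N (S k) (n - i))); [cbn [ptau]; lra|].
        assert (HG : sum1 (fun m => G i m) N = pT r N i *
          sum1 (fun m => if (m <=? n - i)%nat
                         then INR m * pT r N m * ptau r N k (n - i - m) else 0) N).
        { rewrite <- sum1_scal; apply sum1_ext; intros m Hm; unfold G.
          destruct (Nat.leb_spec i n); destruct (Nat.leb_spec m (n - i)); simpl; lia || lra. }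
        rewrite IH, HG; lra.
      - rewrite <- sum1_scal, sum1_zero; [lra|]; intros m Hm; unfold G.
        destruct (Nat.leb_spec i n); simpl; lia || lra. }
    rewrite HL, sum1_swap, <- HA, (S_INR (S k)); lra.
Qed.

End Law.

Lemma pow_le_pow_le1 z m n : 0 <= z <= 1 -> (m <= n)%nat -> z ^ n <= z ^ m.
Proof.
  intros Hz Hmn; replace n with (m + (n - m))%nat by lia; rewrite pow_add.
  assert (z ^ (n - m) <= 1) by (rewrite <- (pow1 (n - m)); apply pow_incr; lra).
  pose proof (pow_le z m ltac:(lra)); nra.
Qed.

Section Generating_function.
Variable r : nat -> R.
Hypothesis hpos : forall n : nat, (1 <= n)%nat -> 0 < r n.
Variable N : nat.

Definition pgf_trunc (z : R) (M : nat) : R := sum1 (fun i => pT r N i * z ^ i) M.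

Lemma pgf_trunc_nonneg z M : 0 <= z -> 0 <= pgf_trunc z M.
Proof.
  intros Hz; apply sum1_nonneg; intros.
  apply Rmult_le_pos; [apply (pT_nonneg r hpos) | apply pow_le]; auto.
Qed.

Lemma pgf_trunc_eq z n : (n <= N)%nat -> pgf_trunc z n = sum1 (fun i => r i * z ^ i) n / RN r N.
Proof.
  intros Hn; unfold pgf_trunc, Rdiv; rewrite Rmult_comm, <- sum1_scal.
  apply sum1_ext; intros m Hm; rewrite pT_in by lia; unfold Rdiv; ring.
Qed.

(* tau_j <= M forces every summand to be <= M. *)
Lemma ptau_pgf_le z j : 0 <= z -> forall M, (M <= N)%nat ->
  sum0 (fun m => ptau r N j m * z ^ m) (S M) <= pgf_trunc z M ^ j.
Proof.
  intros Hz; induction j as [|j IH]; intros M HM.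
  - right; rewrite pow_O; clear HM; induction M as [|M IHM]; simpl; [lra|].
    simpl in IHM; rewrite IHM; lra.
  - set (g := fun m => ptau r N j m * z ^ m).
    set (G := fun i m => if (i <=? m)%nat then pT r N i * z ^ i * g (m - i)%nat else 0).
    transitivity (sum0 (fun m => sum1 (fun i => G i m) N) (S M)).
    { right; apply sum0_ext; intros m Hm; cbn [ptau].
      rewrite Rmult_comm, <- sum1_scal; apply sum1_ext; intros i Hi; unfold G, g.
      destruct (Nat.leb_spec i m); [|lra].
      replace (z ^ m) with (z ^ i * z ^ (m - i)) by (rewrite <- pow_add; f_equal; lia); lra. }
    rewrite sum0_sum1_swap.
    transitivity (sum1 (fun i => if (i <=? M)%nat
                                 then pT r N i * z ^ i * pgf_trunc z M ^ j else 0) N).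
    + apply sum1_le; intros i Hi.
      transitivity (pT r N i * z ^ i * (if (i <=? M)%nat then sum0 g (S (M - i)) else 0)).
      { right; rewrite <- sum0_shift_index, <- sum0_scal by lia.
        apply sum0_ext; intros m _; unfold G; destruct (i <=? m)%nat; lra. }
      destruct (Nat.leb_spec i M); [|lra].
      apply Rmult_le_compat_l;
        [apply Rmult_le_pos; [apply (pT_nonneg r hpos) | apply pow_le; auto]|].
      apply Rle_trans with (pgf_trunc z (M - i) ^ j); [apply IH; lia|].
      apply pow_incr; split; [apply pgf_trunc_nonneg; auto|].
      apply sum1_le_upper; [|lia]; intros.
      apply Rmult_le_pos; [apply (pT_nonneg r hpos) | apply pow_le; auto].
    + right; rewrite (sum1_trunc _ M N HM)
        by (intros m Hm; destruct (Nat.leb_spec m M); lia || lra).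
      rewrite (sum1_ext _ (fun i => pgf_trunc z M ^ j * (pT r N i * z ^ i)))
        by (intros i Hi; destruct (Nat.leb_spec i M); lia || lra).
      rewrite sum1_scal; simpl; fold (pgf_trunc z M); lra.
Qed.

Lemma ptau_lt_le_pgf j n z : (n <= N)%nat -> 0 < z <= 1 ->
  sum0 (ptau r N j) n <= pgf_trunc z n ^ j / z ^ n.
Proof.
  intros Hn Hz; assert (Hzn : 0 < z ^ n) by (apply pow_lt; lra).
  apply Rle_trans with (sum0 (ptau r N j) (S n)).
  { simpl; pose proof (ptau_nonneg r hpos N j n); lra. }
  apply Rmult_le_reg_l with (z ^ n); auto.
  replace (z ^ n * (pgf_trunc z n ^ j / z ^ n)) with (pgf_trunc z n ^ j) by (field; lra).
  rewrite <- sum0_scal; apply Rle_trans with (sum0 (fun m => ptau r N j m * z ^ m) (S n)).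
  - apply sum0_le; intros m Hm; rewrite Rmult_comm; apply Rmult_le_compat_l.
    + apply ptau_nonneg; auto.
    + apply pow_le_pow_le1; lra || lia.
  - apply ptau_pgf_le; lra || auto.
Qed.

Lemma ptau_lt_le_cdf_pow j n : (n <= N)%nat -> sum0 (ptau r N j) n <= cdfT r N n ^ j.
Proof.
  intros Hn; replace (cdfT r N n ^ j) with (pgf_trunc 1 n ^ j / 1 ^ n).
  - apply ptau_lt_le_pgf; lra || auto.
  - rewrite pow1; unfold Rdiv; rewrite Rinv_1, Rmult_1_r; f_equal.
    apply sum1_ext; intros; rewrite pow1; ring.
Qed.

End Generating_function.

Lemma exp_le_mono x y : x <= y -> exp x <= exp y.
Proof. intros [H| ->]; [left; now apply exp_increasing | lra]. Qed.

Lemma ln_le_mono x y : 0 < x -> x <= y -> ln x <= ln y.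
Proof. intros Hx [H| ->]; [left; now apply ln_increasing | lra]. Qed.

Lemma exp_pow x n : exp x ^ n = exp (INR n * x).
Proof.
  induction n as [|n IH]; [simpl; now rewrite Rmult_0_l, exp_0|].
  rewrite S_INR; simpl; rewrite IH, <- exp_plus; f_equal; lra.
Qed.

Lemma one_sub_le_exp_opp u : 1 - u <= exp (- u).
Proof. pose proof (exp_ineq1_le (- u)); lra. Qed.

Lemma exp_le_1 x : x <= 0 -> exp x <= 1.
Proof. intros H; rewrite <- exp_0; now apply exp_le_mono. Qed.

Lemma exp_m1_lt_1 : exp (-1) < 1.
Proof. rewrite <- exp_0; apply exp_increasing; lra. Qed.

Lemma ln_sub_le_div x y : 0 < x -> 0 < y -> ln y - ln x <= y / x - 1.
Proof.
  intros Hx Hy; assert (Hyx : 0 < y / x) by (apply Rdiv_lt_0_compat; lra).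
  replace y with (x * (y / x)) at 1 by (field; lra); rewrite ln_mult by lra.
  enough (ln (y / x) <= y / x - 1) by lra.
  rewrite <- (ln_exp (y / x - 1)); apply ln_le_mono; auto.
  pose proof (exp_ineq1_le (y / x - 1)); lra.
Qed.

Lemma INR_pos_of_ge1 n : (1 <= n)%nat -> 0 < INR n.
Proof. intros; apply lt_0_INR; lia. Qed.

Lemma ln_sub_le_harmonic a n : (1 <= a)%nat -> (a <= S n)%nat ->
  ln (INR (S n)) - ln (INR a) <= sum1 (fun i => if (a <=? i)%nat then / INR i else 0) n.
Proof.
  intros Ha; induction n as [|n IH]; intros H.
  - replace a with 1%nat by lia; simpl; lra.
  - destruct (Nat.eq_dec a (S (S n))) as [->|].
    + rewrite Rminus_diag; apply sum1_nonneg; intros m _.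
      destruct (Nat.leb_spec (S (S n)) m); [|lra].
      left; apply Rinv_0_lt_compat, INR_pos_of_ge1; lia.
    + specialize (IH ltac:(lia)); cbn [sum1]; destruct (Nat.leb_spec a (S n)); [|lia].
      pose proof (INR_pos_of_ge1 (S n) ltac:(lia)).
      pose proof (ln_sub_le_div (INR (S n)) (INR (S (S n))) ltac:(lra)
        (INR_pos_of_ge1 (S (S n)) ltac:(lia))).
      replace (INR (S (S n)) / INR (S n) - 1) with (/ INR (S n)) in *
        by (rewrite (S_INR (S n)); field; lra).
      lra.
Qed.

Lemma harmonic_le_ln n : (1 <= n)%nat -> sum1 (fun i => / INR i) n <= 1 + ln (INR n).
Proof.
  induction n as [|n IH]; intros H; [lia|].
  destruct (Nat.eq_dec n 0) as [->|]; [simpl; rewrite ln_1; lra|].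
  specialize (IH ltac:(lia)); cbn [sum1].
  pose proof (INR_pos_of_ge1 n ltac:(lia)).
  pose proof (ln_sub_le_div (INR (S n)) (INR n) (INR_pos_of_ge1 (S n) ltac:(lia)) ltac:(lra)).
  replace (INR n / INR (S n) - 1) with (- / INR (S n)) in * by (rewrite (S_INR n); field; lra).
  lra.
Qed.

(* x (2 - ln x) is maximal at x = e. *)
Lemma mul_two_sub_ln_le_exp1 x : 0 < x -> x * (2 - ln x) <= exp 1.
Proof.
  intros Hx; set (u := ln x).
  assert (Ex : x = exp u) by (unfold u; now rewrite exp_ln).
  destruct (Rle_dec (2 - u) 0); [pose proof (exp_pos 1); nra|].
  rewrite Ex; pose proof (exp_ineq1_le (1 - u)).
  apply Rle_trans with (exp u * exp (1 - u)).
  - apply Rmult_le_compat_l; [left; apply exp_pos | lra].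
  - rewrite <- exp_plus; right; f_equal; lra.
Qed.

Lemma exponent_le x t w : 1 < x -> x <= t <= 2 * x -> 2 * x <= w ->
  t - w * ln t <= exp 1 - x * ln x.
Proof.
  intros Hx Ht Hw.
  assert (Hlx : 0 < ln x) by (rewrite <- ln_1; apply ln_increasing; lra).
  assert (Hlt : ln x <= ln t) by (apply ln_le_mono; lra).
  assert (2 * x * ln x <= w * ln t).
  { apply Rle_trans with (2 * x * ln t); [apply Rmult_le_compat_l|apply Rmult_le_compat_r]; lra. }
  pose proof (mul_two_sub_ln_le_exp1 x ltac:(lra)); nra.
Qed.

Lemma exists_nat_ratio x n : 1 <= x <= INR n ->
  exists a : nat, (1 <= a <= n)%nat /\ x <= INR n / INR a <= 2 * x.
Proof.
  intros Hx; set (y := INR n / x).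
  assert (Hy : 1 <= y) by (unfold y; apply Rmult_le_reg_r with x; unfold Rdiv;
    [lra | rewrite Rmult_assoc, Rinv_l; lra]).
  destruct (base_Int_part y) as [Hfl Hfu].
  set (a := Z.to_nat (Int_part y)).
  assert (Ha : INR a = IZR (Int_part y)).
  { unfold a; rewrite INR_IZR_INZ, Z2Nat.id; auto.
    apply le_IZR; assert (IZR (Int_part y) > 0) by lra; lra. }
  assert (Ha1 : 1 <= INR a).
  { assert (Hp : (0 < Int_part y)%Z) by (apply lt_IZR; lra).
    rewrite Ha; apply IZR_le; lia. }
  assert (Hay : INR a <= y) by lra.
  assert (Hya : y < INR a + 1) by lra.
  assert (Hxy : INR n = y * x) by (unfold y; field; lra).
  exists a; split; [split|split].
  - apply INR_le; simpl; lra.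
  - apply INR_le; rewrite Hxy; nra.
  - apply Rmult_le_reg_r with (INR a); [lra|]; unfold Rdiv.
    rewrite Rmult_assoc, Rinv_l, Rmult_1_r by lra; nra.
  - apply Rmult_le_reg_r with (INR a); [lra|]; unfold Rdiv.
    rewrite Rmult_assoc, Rinv_l, Rmult_1_r by lra; nra.
Qed.

Lemma finite_lower_bound (f : nat -> R) M : (forall m, (1 <= m)%nat -> 0 < f m) ->
  exists B, 0 < B /\ forall m, (1 <= m <= M)%nat -> B <= f m.
Proof.
  intros Hf; induction M as [|M [B [HB H]]]; [exists 1; split; [lra | intros; lia]|].
  exists (Rmin B (f (S M))); split; [apply Rmin_pos; auto; apply Hf; lia|].
  intros m Hm; destruct (Nat.eq_dec m (S M)) as [->|]; [apply Rmin_r|].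
  apply Rle_trans with B; [apply Rmin_l | apply H; lia].
Qed.

Lemma finite_upper_bound (f : nat -> R) M :
  exists B, forall m, (1 <= m <= M)%nat -> f m <= B.
Proof.
  induction M as [|M [B H]]; [exists 0; intros; lia|].
  exists (Rmax B (f (S M))); intros m Hm.
  destruct (Nat.eq_dec m (S M)) as [->|]; [apply Rmax_r|].
  apply Rle_trans with B; [apply H; lia | apply Rmax_l].
Qed.

Lemma bounds_of_cv (r : nat -> R) (a : R) (ha : 0 < a)
  (hpos : forall n : nat, (1 <= n)%nat -> 0 < r n)
  (hasym : Un_cv (fun n => INR n * r n) a) :
  exists A1 A2, 0 < A1 /\ forall m, (1 <= m)%nat -> A1 <= INR m * r m <= A2.
Proof.
  destruct (hasym (a / 2) ltac:(lra)) as [N0 HN0].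
  destruct (finite_lower_bound (fun n => INR n * r n) N0) as [B1 [HB1 H1]].
  { intros m Hm; apply Rmult_lt_0_compat; [apply INR_pos_of_ge1 | apply hpos]; auto. }
  destruct (finite_upper_bound (fun n => INR n * r n) N0) as [B2 H2].
  exists (Rmin B1 (a / 2)), (Rmax B2 (3 * a / 2)); split; [apply Rmin_pos; lra|].
  intros m Hm; destruct (le_dec m N0).
  - split; [apply Rle_trans with B1; [apply Rmin_l | apply H1; lia]|].
    apply Rle_trans with B2; [apply H2; lia | apply Rmax_l].
  - specialize (HN0 m ltac:(lia)); unfold R_dist in HN0; apply Rabs_def2 in HN0.
    split; [apply Rle_trans with (a / 2); [apply Rmin_r | lra]|].
    apply Rle_trans with (3 * a / 2); [lra | apply Rmax_r].
Qed.

(* Each term i >= a of the truncated generating function at z = e^{-1/a} loses at least the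
   fraction 1 - e^{-1} of its mass; A1/A2 compares this loss with R_n. *)
Definition decay_rate (A1 A2 : R) : R := (1 - exp (-1)) * A1 / A2.

Section Regular_weights.
Variable r : nat -> R.
Hypothesis hpos : forall n : nat, (1 <= n)%nat -> 0 < r n.
Variables A1 A2 : R.
Hypothesis hA1 : 0 < A1.
Hypothesis hA : forall m, (1 <= m)%nat -> A1 <= INR m * r m <= A2.

Lemma r_ge m : (1 <= m)%nat -> A1 / INR m <= r m.
Proof.
  intros Hm; pose proof (INR_pos_of_ge1 m Hm); destruct (hA m Hm).
  apply Rmult_le_reg_l with (INR m); auto.
  replace (INR m * (A1 / INR m)) with A1 by (field; lra); lra.
Qed.

Lemma r_le m : (1 <= m)%nat -> r m <= A2 / INR m.
Proof.
  intros Hm; pose proof (INR_pos_of_ge1 m Hm); destruct (hA m Hm).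
  apply Rmult_le_reg_l with (INR m); auto.
  replace (INR m * (A2 / INR m)) with A2 by (field; lra); lra.
Qed.

Lemma A1_le_A2 : A1 <= A2.
Proof. destruct (hA 1%nat ltac:(lia)); lra. Qed.

Lemma decay_rate_pos : 0 < decay_rate A1 A2.
Proof.
  pose proof exp_m1_lt_1; pose proof A1_le_A2.
  unfold decay_rate; apply Rdiv_lt_0_compat; [apply Rmult_lt_0_compat|]; lra.
Qed.

Lemma decay_rate_lt_1 : decay_rate A1 A2 < 1.
Proof.
  pose proof exp_m1_lt_1; pose proof (exp_pos (-1)); pose proof A1_le_A2.
  unfold decay_rate; apply Rmult_lt_reg_r with A2; [lra|].
  replace ((1 - exp (-1)) * A1 / A2 * A2) with ((1 - exp (-1)) * A1) by (field; lra); nra.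
Qed.

(* Compare n P(T = n) >= A1 / R_N with m P(T = m) <= A2 / R_N in the size-bias identity. *)
Lemma ptau_succ_le N k n : (1 <= n <= N)%nat ->
  ptau r N (S k) n <= (A2 / A1) * INR (S k) * pT r N n * sum0 (ptau r N k) n.
Proof.
  intros Hn; set (Q := sum0 (ptau r N k) n); set (RNN := RN r N).
  assert (HR : 0 < RNN) by (apply RN_pos; auto; lia).
  assert (HQ : 0 <= Q) by (apply sum0_nonneg; intros; apply ptau_nonneg; auto).
  assert (Hbias : INR n * ptau r N (S k) n <= INR (S k) * ((A2 / RNN) * Q)).
  { rewrite ptau_size_bias by auto; apply Rmult_le_compat_l; [apply pos_INR|].
    apply Rle_trans with
      (sum1 (fun m => if (m <=? n)%nat then A2 / RNN * ptau r N k (n - m) else 0) N).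
    - apply sum1_le; intros m Hm; destruct (m <=? n)%nat; [|lra].
      apply Rmult_le_compat_r; [apply ptau_nonneg; auto|].
      rewrite pT_in by auto; fold RNN; destruct (hA m ltac:(lia)).
      replace (INR m * (r m / RNN)) with ((INR m * r m) / RNN) by (field; lra).
      apply Rmult_le_compat_r; [left; apply Rinv_0_lt_compat|]; lra.
    - right; rewrite (sum1_trunc _ n N)
        by (try lia; intros m Hm; destruct (Nat.leb_spec m n); lia || lra).
      rewrite (sum1_ext _ (fun m => A2 / RNN * ptau r N k (n - m)))
        by (intros m Hm; destruct (Nat.leb_spec m n); lia || lra).
      now rewrite sum1_scal, sum1_rev. }
  assert (Hlow : A1 <= INR n * pT r N n * RNN).
  { rewrite pT_in by auto; fold RNN; destruct (hA n ltac:(lia)).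
    replace (INR n * (r n / RNN) * RNN) with (INR n * r n) by (field; lra); lra. }
  set (X := ptau r N (S k) n) in *; set (P := pT r N n) in *.
  assert (HX : 0 <= X) by (apply ptau_nonneg; auto).
  assert (HP : 0 <= P) by (apply pT_nonneg; auto).
  apply Rmult_le_reg_l with A1; auto.
  replace (A1 * (A2 / A1 * INR (S k) * P * Q)) with (P * RNN * (INR (S k) * (A2 / RNN * Q)))
    by (field; lra).
  apply Rle_trans with (INR n * P * RNN * X); [apply Rmult_le_compat_r; auto|].
  replace (INR n * P * RNN * X) with (P * RNN * (INR n * X)) by ring.
  apply Rmult_le_compat_l; [apply Rmult_le_pos|]; lra.
Qed.

Lemma RN_le_ln n : (1 <= n)%nat -> RN r n <= A2 * (ln (INR n) + 1).
Proof.
  intros Hn; apply Rle_trans with (A2 * sum1 (fun i => / INR i) n).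
  - unfold RN; rewrite <- sum1_scal; apply sum1_le; intros i Hi.
    apply r_le; lia.
  - pose proof (harmonic_le_ln n Hn); pose proof A1_le_A2.
    apply Rmult_le_compat_l; lra.
Qed.

Lemma pgf_mass_loss_ge a n : (1 <= a <= n)%nat ->
  (1 - exp (-1)) * A1 * (ln (INR (S n)) - ln (INR a)) <=
  sum1 (fun i => r i * (1 - exp (- (1 / INR a)) ^ i)) n.
Proof.
  intros Ha; set (z := exp (- (1 / INR a))).
  assert (Hai : 0 < INR a) by (apply INR_pos_of_ge1; lia).
  assert (Hkap : 0 <= 1 - exp (-1)) by (pose proof exp_m1_lt_1; lra).
  apply Rle_trans with
    ((1 - exp (-1)) * A1 * sum1 (fun i => if (a <=? i)%nat then / INR i else 0) n).
  { apply Rmult_le_compat_l; [apply Rmult_le_pos; lra|]; apply ln_sub_le_harmonic; lia. }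
  rewrite <- sum1_scal; apply sum1_le; intros i Hi.
  assert (Hii : 0 < INR i) by (apply INR_pos_of_ge1; lia).
  assert (Hzi : z ^ i = exp (- (INR i / INR a))).
  { unfold z; rewrite exp_pow; f_equal; field; lra. }
  pose proof (hpos i ltac:(lia)).
  assert (Hzi1 : z ^ i <= 1).
  { rewrite Hzi; apply exp_le_1.
    assert (0 <= INR i / INR a) by (apply Rlt_le, Rdiv_lt_0_compat; lra); lra. }
  destruct (Nat.leb_spec a i) as [Hai'|]; [|rewrite Rmult_0_r; apply Rmult_le_pos; lra].
  assert (Hze : z ^ i <= exp (-1)).
  { rewrite Hzi; apply exp_le_mono.
    enough (1 <= INR i / INR a) by lra.
    apply Rmult_le_reg_r with (INR a); auto.
    replace (INR i / INR a * INR a) with (INR i) by (field; lra).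
    rewrite Rmult_1_l; now apply le_INR. }
  pose proof (r_ge i ltac:(lia)).
  assert (0 <= A1 / INR i) by (apply Rlt_le, Rdiv_lt_0_compat; lra).
  replace ((1 - exp (-1)) * A1 * / INR i) with ((A1 / INR i) * (1 - exp (-1))) by (field; lra).
  apply Rmult_le_compat; lra.
Qed.

Lemma pgf_trunc_decay N a n : (1 <= a <= n)%nat -> (n <= N)%nat ->
  pgf_trunc r N (exp (- (1 / INR a))) n <=
  cdfT r N n * exp (- (decay_rate A1 A2 * ln (INR n / INR a) / (ln (INR n) + 1))).
Proof.
  intros Ha HnN; set (L := ln (INR n) + 1); set (t := INR n / INR a).
  set (rho := decay_rate A1 A2); set (z := exp (- (1 / INR a))).
  assert (Hai : 0 < INR a) by (apply INR_pos_of_ge1; lia).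
  assert (Hn1 : 1 <= INR n) by (rewrite <- INR_1; apply le_INR; lia).
  assert (HL : 1 <= L) by (unfold L; pose proof (ln_le_mono 1 (INR n)); rewrite ln_1 in *; lra).
  assert (Ht1 : 1 <= t).
  { unfold t; apply Rmult_le_reg_r with (INR a); auto.
    replace (INR n / INR a * INR a) with (INR n) by (field; lra).
    rewrite Rmult_1_l; apply le_INR; lia. }
  assert (Hlt0 : 0 <= ln t) by (rewrite <- ln_1; apply ln_le_mono; lra).
  assert (Hlt : ln t <= ln (INR (S n)) - ln (INR a)).
  { unfold t, Rdiv; rewrite ln_mult, ln_Rinv by (try apply Rinv_0_lt_compat; lra).
    enough (ln (INR n) <= ln (INR (S n))) by lra.
    apply ln_le_mono; [lra | apply le_INR; lia]. }
  assert (HRn : 0 < RN r n) by (apply RN_pos; auto; lia).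
  assert (HRN : 0 < RN r N) by (apply RN_pos; auto; lia).
  assert (Hloss := pgf_mass_loss_ge a n Ha); fold z in Hloss.
  assert (Hsplit : sum1 (fun i => r i * z ^ i) n =
                   RN r n - sum1 (fun i => r i * (1 - z ^ i)) n).
  { unfold RN; rewrite (sum1_ext r (fun i => r i * z ^ i + r i * (1 - z ^ i))) by (intros; ring).
    rewrite sum1_plus; ring. }
  assert (Hrate : rho * ln t / L * RN r n <= (1 - exp (-1)) * A1 * ln t).
  { assert (HRL : RN r n <= A2 * L) by (apply RN_le_ln; lia).
    assert (Hrho : 0 < rho) by apply decay_rate_pos.
    apply Rle_trans with (rho * ln t / L * (A2 * L)).
    - apply Rmult_le_compat_l; auto.
      apply Rmult_le_pos; [apply Rmult_le_pos|left; apply Rinv_0_lt_compat]; lra.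
    - right; unfold rho, decay_rate; field; pose proof A1_le_A2; lra. }
  rewrite pgf_trunc_eq, cdfT_eq by (auto; lia); fold z.
  unfold Rdiv at 1 2; rewrite (Rmult_comm (RN r n)), Rmult_assoc, (Rmult_comm (/ RN r N)).
  apply Rmult_le_compat_r; [left; apply Rinv_0_lt_compat; auto|].
  rewrite Hsplit; apply Rle_trans with (RN r n * (1 - rho * ln t / L)).
  - pose proof exp_m1_lt_1.
    assert ((1 - exp (-1)) * A1 * ln t <= (1 - exp (-1)) * A1 * (ln (INR (S n)) - ln (INR a)))
      by (apply Rmult_le_compat_l; [apply Rmult_le_pos|]; lra).
    lra.
  - apply Rmult_le_compat_l; [lra | apply one_sub_le_exp_opp].
Qed.

Lemma ptau_lt_le_exp N j a n : (1 <= a <= n)%nat -> (n <= N)%nat ->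
  sum0 (ptau r N j) n <= cdfT r N n ^ j *
    exp (INR n / INR a - INR j * decay_rate A1 A2 / (ln (INR n) + 1) * ln (INR n / INR a)).
Proof.
  intros Ha HnN; set (z := exp (- (1 / INR a))).
  assert (Hai : 0 < INR a) by (apply INR_pos_of_ge1; lia).
  assert (Hz : 0 < z <= 1).
  { split; [apply exp_pos|]; apply exp_le_1.
    assert (0 < 1 / INR a) by (apply Rdiv_lt_0_compat; lra); lra. }
  assert (Hzn : z ^ n = exp (- (INR n / INR a)))
    by (unfold z; rewrite exp_pow; f_equal; field; lra).
  apply Rle_trans with (pgf_trunc r N z n ^ j / z ^ n); [apply ptau_lt_le_pgf; auto|].
  rewrite Hzn, exp_Ropp; unfold Rdiv; rewrite Rinv_inv.
  apply Rle_trans with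
    ((cdfT r N n * exp (- (decay_rate A1 A2 * ln (INR n / INR a) / (ln (INR n) + 1)))) ^ j
     * exp (INR n / INR a)).
  - apply Rmult_le_compat_r; [left; apply exp_pos|].
    apply pow_incr; split; [apply pgf_trunc_nonneg; auto; lra | now apply pgf_trunc_decay].
  - rewrite Rpow_mult_distr, exp_pow, Rmult_assoc, <- exp_plus.
    right; f_equal; f_equal; unfold Rdiv; ring.
Qed.

Lemma ptau_lt_bound c N j n : 0 < c -> 4 * c <= decay_rate A1 A2 ->
  (1 <= n <= N)%nat -> (S j <= n)%nat ->
  let x := c * INR (S j) / (ln (INR n) + 1) in
  sum0 (ptau r N j) n <= exp (exp 1) * cdfT r N n ^ j * exp (- (x * logp x)).
Proof.
  intros Hc Hcrho Hn Hjn x; set (L := ln (INR n) + 1); fold L in x.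
  set (F := cdfT r N n); set (rho := decay_rate A1 A2) in *.
  assert (HF : 0 <= F) by (apply cdfT_nonneg; auto).
  assert (Hn1 : 1 <= INR n) by (rewrite <- INR_1; apply le_INR; lia).
  assert (HL : 1 <= L) by (unfold L; pose proof (ln_le_mono 1 (INR n)); rewrite ln_1 in *; lra).
  assert (Hrho1 : rho < 1) by apply decay_rate_lt_1.
  assert (HjR : 0 <= INR j) by apply pos_INR.
  assert (Hxk : x * L = c * INR (S j)) by (unfold x; field; lra).
  destruct (Rle_dec x 1) as [Hx1 | Hx1].
  - assert (Hlp : logp x = 0).
    { assert (Hx0 : 0 < x).
      { unfold x; apply Rdiv_lt_0_compat; [apply Rmult_lt_0_compat|]; try lra.
        apply INR_pos_of_ge1; lia. }
      unfold logp; apply Rmax_right; rewrite <- ln_1; apply ln_le_mono; lra. }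
    rewrite Hlp, Rmult_0_r, Ropp_0, exp_0, Rmult_1_r.
    apply Rle_trans with (F ^ j); [apply ptau_lt_le_cdf_pow; auto; lia|].
    assert (1 <= exp (exp 1)) by (pose proof (exp_ineq1_le (exp 1)); pose proof (exp_pos 1); lra).
    pose proof (pow_le F j HF); nra.
  - apply Rnot_le_lt in Hx1.
    assert (Hj : 1 <= INR j).
    { rewrite S_INR in Hxk; destruct j; [simpl in Hxk; nra|].
      rewrite <- INR_1; apply le_INR; lia. }
    assert (HxN : x <= INR n).
    { apply Rle_trans with (INR (S j)); [|apply le_INR; lia].
      rewrite S_INR in *; nra. }
    destruct (exists_nat_ratio x n ltac:(lra)) as [a [Ha [Ht1 Ht2]]].
    apply Rle_trans with (F ^ j * exp (exp 1 - x * ln x)).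
    + apply Rle_trans with
        (F ^ j * exp (INR n / INR a - INR j * rho / L * ln (INR n / INR a)));
        [now apply ptau_lt_le_exp|].
      apply Rmult_le_compat_l; [apply pow_le; auto|]; apply exp_le_mono.
      apply exponent_le; try lra.
      apply Rmult_le_reg_r with L; [lra|].
      replace (INR j * rho / L * L) with (INR j * rho) by (field; lra).
      rewrite S_INR in Hxk; nra.
    + assert (Hlp : logp x = ln x).
      { unfold logp; apply Rmax_left; rewrite <- ln_1; apply ln_le_mono; lra. }
      rewrite Hlp; unfold Rminus; rewrite exp_plus; right; ring.
Qed.

End Regular_weights.

Theorem mainTheorem4 (r : nat -> R) (a : R)
  (ha : 0 < a)
  (hpos : forall n : nat, (1 <= n)%nat -> 0 < r n)
  (hasym : Un_cv (fun n => INR n * r n) a) :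
  exists C c : R, 0 < C /\ 0 < c /\ c < 1 /\
    forall N k n : nat, (1 <= N)%nat -> (1 <= k)%nat -> (1 <= n)%nat -> (n <= N)%nat ->
      ptau r N k n <=
        C * INR k * pT r N n * (cdfT r N n) ^ (k - 1) *
        exp (- ((c * INR k / (ln (INR n) + 1)) * logp (c * INR k / (ln (INR n) + 1)))).
Proof.
  destruct (bounds_of_cv r a ha hpos hasym) as [A1 [A2 [hA1 hA]]].
  pose proof (decay_rate_pos r A1 A2 hA1 hA); pose proof (decay_rate_lt_1 r A1 A2 hA1 hA).
  assert (HA : 0 < A2 / A1) by (pose proof (A1_le_A2 r A1 A2 hA); apply Rdiv_lt_0_compat; lra).
  assert (HC : 0 < A2 / A1 * exp (exp 1)) by (apply Rmult_lt_0_compat; [|apply exp_pos]; lra).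
  exists (A2 / A1 * exp (exp 1)), (decay_rate A1 A2 / 4).
  split; [exact HC|]; split; [lra|]; split; [lra|].
  intros N k n HN Hk Hn HnN.
  destruct (le_lt_dec k n) as [Hkn | Hkn].
  - destruct k as [|j]; [lia|]; replace (S j - 1)%nat with j by lia.
    set (x := decay_rate A1 A2 / 4 * INR (S j) / (ln (INR n) + 1)).
    eapply Rle_trans; [apply (ptau_succ_le r hpos A1 A2 hA1 hA); lia|].
    replace (A2 / A1 * exp (exp 1) * INR (S j) * pT r N n * cdfT r N n ^ j * exp (- (x * logp x)))
      with (A2 / A1 * INR (S j) * pT r N n * (exp (exp 1) * cdfT r N n ^ j * exp (- (x * logp x))))
      by ring.
    apply Rmult_le_compat_l.
    + pose proof (pos_INR (S j)); pose proof (pT_nonneg r hpos N n).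
      apply Rmult_le_pos; [apply Rmult_le_pos; [apply Rlt_le, HA|]|]; assumption.
    + apply (ptau_lt_bound r hpos A1 A2 hA1 hA); lra || lia.
  - rewrite ptau_lt_k by auto.
    pose proof (pos_INR k); pose proof (pT_nonneg r hpos N n).
    pose proof (pow_le _ (k - 1) (cdfT_nonneg r hpos N n)).
    apply Rmult_le_pos; [|apply Rlt_le, exp_pos].
    apply Rmult_le_pos; [|assumption]; apply Rmult_le_pos; [|assumption].
    apply Rmult_le_pos; [apply Rlt_le, HC | assumption].
Qed.
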